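(* For every integer $n\ge 1$, $\mathbf{w}(\omega^{\times n})=\omega^{n-1}$.
   Context: $\omega^{\times n}=\omega\times\dots\times\omega$ ($n$ factors) is the cartesian product of $n$ copies of the ordinal $\omega$ with the componentwise order. The width $\mathbf{w}(A)$ of a wqo $A$ is the rank of the forest of nonempty finite sequences of pairwise incomparable elements of $A$ ordered by initial segment, i.e. $\mathbf{w}(A)=\sup_s(r(s)+1)$ with $r(s)=\sup\{r(t)+1: t$ child of $s\}$. *)

From mathcomp Require Import all_boot.
Set Implicit Arguments. Unset Strict Implicit. Unset Printing Implicit Defensive.

(* ---------- Ordinals below omega^omega in Cantor normal form ----------
   A list [c_0; c_1; ...; c_k] of naturals denotes the ordinal
   omega^k * c_k + ... + omega * c_1 + c_0.  It is canonical when its last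
   coefficient is nonzero (the empty list is the ordinal 0). *)
Definition ocanon (s : seq nat) : bool := last 1 s != 0.

Fixpoint lexlt (a b : seq nat) : bool :=
  match a, b with
  | x :: a', y :: b' => (x < y) || ((x == y) && lexlt a' b')
  | _, _ => false
  end.

(* strict ordinal order on canonical forms: compare leading exponent
   (= size), then coefficients from the highest one down *)
Definition olt (s t : seq nat) : bool :=
  (size s < size t) || ((size s == size t) && lexlt (rev s) (rev t)).
Definition ole (s t : seq nat) : bool := (s == t) || olt s t.

Definition osucc (s : seq nat) : seq nat :=
  match s with [::] => [:: 1] | c :: s' => c.+1 :: s' end.

Definition opow_omega (k : nat) : seq nat := rcons (nseq k 0) 1.

Definition oub (P : seq nat -> Prop) (x : seq nat) : Prop :=
  forall y, P y -> ole y x.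
Definition ois_sup (P : seq nat -> Prop) (x : seq nat) : Prop :=
  [/\ ocanon x, oub P x & forall y, ocanon y -> oub P y -> ole x y].

(* ---------- the wqo omega^{x n} with componentwise order ---------- *)
Definition prodw (n : nat) := 'I_n -> nat.
Definition prodw_le n (x y : prodw n) : bool := [forall i, x i <= y i].
Definition incomp n (x y : prodw n) : bool :=
  ~~ prodw_le x y && ~~ prodw_le y x.

(* nodes of the forest: nonempty finite sequences of pairwise incomparable
   elements; ordered by initial segment *)
Definition antichain_node n (s : seq (prodw n)) : Prop :=
  s <> [::] /\ pairwise (@incomp n) s.
Definition forest_child n (s t : seq (prodw n)) : Prop :=
  exists a, t = rcons s a.

Definition is_rank_fun n (r : seq (prodw n) -> seq nat) : Prop :=
  forall s, antichain_node s ->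
    ois_sup (fun o => exists t, [/\ antichain_node t, forest_child s t &
                                     o = osucc (r t)]) (r s).

(* w(omega^{x n}) = alpha, alpha < omega^omega: the rank of the forest
   (sup_s (r(s)+1)) equals alpha *)
Definition width_is n (alpha : seq nat) : Prop :=
  exists r : seq (prodw n) -> seq nat, is_rank_fun r /\
    ois_sup (fun o => exists s, antichain_node s /\ o = osucc (r s)) alpha.

From mathcomp Require Import all_boot zify.
From Stdlib Require Import Classical ClassicalEpsilon.
Set Implicit Arguments. Unset Strict Implicit. Unset Printing Implicit Defensive.

(* Ordinals below omega^omega with at most n digits are coded by lists of
   length n (highest coefficient first), ordered lexicographically; pointwise
   addition is then the natural (Hessenberg) sum.  An orthant with d+1 free
   coordinates has height at most omega^d in the forest of antichains: a point
   incomparable to a lies below a in some free coordinate, hence in one of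
   finitely many orthants of one dimension less, and heights of unions add
   naturally.  Conversely a slab {x | x_i < c_i + h} with d+2 free coordinates
   has height at least omega^d * h: a suitable pivot splits its residual into a
   slab of height omega^d * (h-1) and a mutually incomparable slab of one
   dimension less and arbitrarily large height. *)

Definition lexle (u v : seq nat) : bool := (u == v) || lexlt u v.

Lemma lexlt_irr u : lexlt u u = false.
Proof. by elim: u => [|x u IH] //=; rewrite ltnn eqxx IH. Qed.

Lemma lexlt_trans u v w : lexlt u v -> lexlt v w -> lexlt u w.
Proof.
elim: u v w => [|x u IH] [|y v] [|z w] //=.
case/orP=> [xy|/andP[/eqP-> uv]]; case/orP=> [yz|/andP[/eqP<- vw]].
- by rewrite (ltn_trans xy yz).
- by rewrite xy.
- by rewrite yz.
- by rewrite eqxx (IH _ _ uv vw) orbT.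
Qed.

Lemma lexlt_asym u v : lexlt u v -> lexlt v u = false.
Proof. by move=> uv; apply/negP=> /(lexlt_trans uv); rewrite lexlt_irr. Qed.

Lemma lexlt_total u v : size u = size v -> [|| lexlt u v, u == v | lexlt v u].
Proof.
elim: u v => [|x u IH] [|y v] //= [/IH uv].
case: (ltngtP x y) => xy /=; rewrite ?orbT //.
by rewrite xy eqseq_cons eqxx /=; case/or3P: uv => ->; rewrite ?orbT.
Qed.

Lemma lexle_refl u : lexle u u.
Proof. by rewrite /lexle eqxx. Qed.

Lemma lexltW u v : lexlt u v -> lexle u v.
Proof. by rewrite /lexle => ->; rewrite orbT. Qed.

Lemma lexle_cons x y u v :
  lexle (x :: u) (y :: v) = (x < y) || ((x == y) && lexle u v).
Proof. by rewrite /lexle /= eqseq_cons; case: (ltngtP x y). Qed.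

Lemma lexle_lt_trans u v w : lexle u v -> lexlt v w -> lexlt u w.
Proof. by case/orP=> [/eqP->//|]; apply: lexlt_trans. Qed.

Lemma lexlt_le_trans u v w : lexlt u v -> lexle v w -> lexlt u w.
Proof. by move=> uv /orP[/eqP<-//|]; apply: lexlt_trans. Qed.

Lemma lexle_trans u v w : lexle u v -> lexle v w -> lexle u w.
Proof. by case/orP=> [/eqP->//|uv] /(lexlt_le_trans uv)/lexltW. Qed.

Lemma lexleNgt u v : size u = size v -> lexle u v = ~~ lexlt v u.
Proof.
move=> suv; case/or3P: (lexlt_total suv) => [uv|/eqP->|vu].
- by rewrite lexltW // lexlt_asym.
- by rewrite lexle_refl lexlt_irr.
- by rewrite vu /lexle lexlt_asym // orbF; apply/eqP=> e; rewrite e lexlt_irr in vu.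
Qed.

Lemma lexlt_nseq_cat p u v : lexlt (nseq p 0 ++ u) (nseq p 0 ++ v) = lexlt u v.
Proof. by elim: p => //= p ->. Qed.

Lemma lexlt_nseq0 g k : lexlt g (nseq k 0) = false.
Proof. by elim: k g => [|k IH] [|x g] //=; rewrite IH andbF. Qed.

Lemma lexlt_acc k u : size u = k -> Acc (fun a b => size a = k /\ lexlt a b) u.
Proof.
elim: k u => [|k IHk] u.
  by move/size0nil->; constructor=> -[|? ?] [].
case: u => [|x u]; first discriminate.
move=> [su]; have := IHk u su.
elim/ltn_ind: x u su => x IHx u su acc_u.
elim: acc_u su => {}u _ IHu su.
constructor=> -[|y a] []; first discriminate.
case=> sa /orP[yx|/andP[/eqP-> au]]; first exact: IHx _ yx _ sa (IHk a sa).
exact: IHu.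
Qed.

Lemma lexle_minimum k (P : seq nat -> Prop) : (exists u, size u = k /\ P u) ->
  exists m, [/\ size m = k, P m & forall v, size v = k -> P v -> lexle m v].
Proof.
case=> u [su Pu]; have acc_u := lexlt_acc su.
elim: acc_u Pu su => {}u _ IH Pu su.
case: (classic (exists v, [/\ size v = k, lexlt v u & P v])).
  by case=> v [sv vu Pv]; apply: (IH v).
move=> no_smaller; exists u; split=> // v sv Pv.
rewrite lexleNgt ?su ?sv //; apply/negP=> vu.
by apply: no_smaller; exists v.
Qed.

Fixpoint nsum (u v : seq nat) : seq nat :=
  if (u, v) is (x :: u', y :: v') then x + y :: nsum u' v' else [::].

Lemma size_nsum u v : size u = size v -> size (nsum u v) = size u.
Proof. by elim: u v => [|x u IH] [|y v] //= [/IH ->]. Qed.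

Lemma nsumC u v : nsum u v = nsum v u.
Proof. by elim: u v => [|x u IH] [|y v] //=; rewrite addnC IH. Qed.

Lemma nsum_nseq_cat p u v :
  nsum (nseq p 0 ++ u) (nseq p 0 ++ v) = nseq p 0 ++ nsum u v.
Proof. by elim: p => //= p ->. Qed.

Lemma nsum_nseq0l k u : size u = k -> nsum (nseq k 0) u = u.
Proof. by move<-; elim: u => //= x u ->. Qed.

Lemma lexlt_nsum2r u v w : size u = size w -> size v = size w ->
  lexlt u v -> lexlt (nsum u w) (nsum v w).
Proof.
elim: u v w => [|x u IH] [|y v] [|z w] //= [su] [sv].
case/orP=> [xy|/andP[/eqP-> uv]]; first by rewrite ltn_add2r xy.
by rewrite eqxx (IH _ _ su sv uv) orbT.
Qed.

Lemma lexlt_nsum2l u v w : size u = size w -> size v = size w ->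
  lexlt u v -> lexlt (nsum w u) (nsum w v).
Proof. by move=> su sv uv; rewrite ![nsum w _]nsumC lexlt_nsum2r. Qed.

Lemma lexle_nsum2r u v w : size u = size w -> size v = size w ->
  lexle u v -> lexle (nsum u w) (nsum v w).
Proof.
move=> su sv /orP[/eqP->|uv]; first exact: lexle_refl.
exact/lexltW/lexlt_nsum2r.
Qed.

Lemma lexle_nsum2l u v w : size u = size w -> size v = size w ->
  lexle u v -> lexle (nsum w u) (nsum w v).
Proof. by move=> su sv uv; rewrite ![nsum w _]nsumC lexle_nsum2r. Qed.

Lemma lexle_nsumr u v : size u = size v -> lexle u (nsum u v).
Proof.
elim: u v => [|x u IH] [|[|y] v] //= [/IH uv]; rewrite lexle_cons.
  by rewrite addn0 ltnn eqxx uv.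
by rewrite addnS ltnS leq_addr.
Qed.

Lemma lexle_nsuml u v : size u = size v -> lexle u (nsum v u).
Proof. by move=> s; rewrite nsumC lexle_nsumr. Qed.

Lemma lexlt_nsum_split u v w : size u = size w -> size v = size w ->
  lexlt w (nsum u v) ->
  (exists u', [/\ size u' = size w, lexlt u' u & lexle w (nsum u' v)]) \/
  (exists v', [/\ size v' = size w, lexlt v' v & lexle w (nsum u v')]).
Proof.
elim: u v w => [|x u IH] [|y v] [|z w] //= [su] [sv].
case/orP=> [zxy|/andP[/eqP-> wuv]].
- case: x zxy => [|x] zxy.
  + case: y zxy => [|y] // zxy; right; exists (y :: w); split; rewrite //= ?ltnSn //.
    rewrite lexle_cons add0n; move: zxy; rewrite ltnS leq_eqVlt => /orP[/eqP->|->] //.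
    by rewrite ltnn eqxx lexle_nsuml.
  + left; exists (x :: w); split; rewrite //= ?ltnSn //.
    rewrite lexle_cons; move: zxy; rewrite addSn ltnS leq_eqVlt => /orP[/eqP->|->] //.
    by rewrite ltnn eqxx lexle_nsumr.
- case: (IH _ _ su sv wuv) => [[u' [s1 l1 l2]]|[v' [s1 l1 l2]]].
  + by left; exists (x :: u'); rewrite /= s1 eqxx l1 lexle_cons eqxx l2 !orbT.
  + by right; exists (y :: v'); rewrite /= s1 eqxx l1 lexle_cons eqxx l2 !orbT.
Qed.

Fixpoint drop0 (u : seq nat) : seq nat :=
  if u is 0 :: u' then drop0 u' else u.

(* Codes of a fixed length list the Cantor normal form coefficients from the
   highest power down; [to_ord] strips the leading zeros and reverses. *)
Definition to_ord (u : seq nat) : seq nat := rev (drop0 u).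

Lemma to_ord_canon u : ocanon (to_ord u).
Proof.
rewrite /ocanon /to_ord; elim: u => [|[|x] u IH] //=.
by rewrite rev_cons last_rcons.
Qed.

Lemma size_to_ord u : size (to_ord u) <= size u.
Proof.
rewrite /to_ord size_rev; elim: u => [|[|x] u IH] //=.
exact: leq_trans IH _.
Qed.

Lemma to_ord0 u : to_ord (0 :: u) = to_ord u.
Proof. by []. Qed.

Lemma to_ordS x u : x != 0 -> to_ord (x :: u) = rev (x :: u).
Proof. by case: x. Qed.

Lemma olt_irr s : olt s s = false.
Proof. by rewrite /olt ltnn lexlt_irr andbF. Qed.

Lemma olt_to_ord u v : size u = size v -> olt (to_ord u) (to_ord v) = lexlt u v.
Proof.
elim: u v => [|x u IH] [|y v] // [suv].
case: x => [|x]; case: y => [|y].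
- by rewrite !to_ord0 IH.
- by rewrite to_ord0 to_ordS // /olt (size_rev (_ :: v)) /= ltnS -suv size_to_ord.
- rewrite to_ord0 to_ordS // /olt (size_rev (_ :: u)) /=.
  have := size_to_ord v; rewrite -suv => le_vu.
  rewrite ltnNge (leq_trans le_vu (leqnSn _)) /=.
  by case: eqP => // e; move: le_vu; rewrite -e ltnn.
- by rewrite !to_ordS //= /olt !size_rev /= suv ltnn eqxx /= !revK.
Qed.

Lemma ole_to_ord u v : size u = size v -> ole (to_ord u) (to_ord v) = lexle u v.
Proof.
move=> suv; rewrite /ole /lexle olt_to_ord //.
case: (eqVneq u v) => [->|nuv]; first by rewrite eqxx.
case: eqP => //= e; case/or3P: (lexlt_total suv) => [->|/eqP uv|vu] //.
  by rewrite uv eqxx in nuv.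
by have := olt_to_ord (esym suv); rewrite vu e olt_irr.
Qed.

Fixpoint lexsucc (u : seq nat) : seq nat :=
  match u with
  | [::] => [::]
  | [:: x] => [:: x.+1]
  | x :: u' => x :: lexsucc u'
  end.

Lemma size_lexsucc u : size (lexsucc u) = size u.
Proof. by elim: u => [|x [|y u] IH] //=; rewrite IH. Qed.

Lemma lexle_lexsucc u v : size u = size v -> u != [::] ->
  lexle (lexsucc u) v = lexlt u v.
Proof.
elim: u v => [|x [|z u] IH] [|y v] //= [suv] _.
  by case: v suv => // _; rewrite lexle_cons /lexle /= andbT andbF orbF orbC -leq_eqVlt.
by rewrite lexle_cons IH.
Qed.

Lemma rev_lexsucc u : u != [::] -> rev (lexsucc u) = osucc (rev u).
Proof.
elim: u => [|x [|z u] IH] // _.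
by rewrite [lexsucc _]/= rev_cons IH // [rev (x :: _)]rev_cons rev_cons; case: (rev u).
Qed.

Lemma osucc_to_ord u : u != [::] -> osucc (to_ord u) = to_ord (lexsucc u).
Proof.
elim: u => [|x [|z u] IH] // _; first by case: x.
case: x => [|x]; first exact: IH.
by rewrite !to_ordS //= -rev_lexsucc.
Qed.

Lemma ole_osucc_to_ord u v : size u = size v -> u != [::] ->
  ole (osucc (to_ord u)) (to_ord v) = lexlt u v.
Proof.
by move=> suv u0; rewrite osucc_to_ord // ole_to_ord ?size_lexsucc // lexle_lexsucc.
Qed.

Lemma to_ord_pad k y : ocanon y -> size y <= k ->
  size (nseq (k - size y) 0 ++ rev y) = k /\ to_ord (nseq (k - size y) 0 ++ rev y) = y.
Proof.
move=> cy sy; split; first by rewrite size_cat size_nseq size_rev subnK.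
rewrite /to_ord; elim: (k - size y) => [|p IHp] //=.
move: cy; rewrite /ocanon; case/lastP: y {sy} => [|y a] //.
by rewrite last_rcons rev_rcons; case: a => // a _; rewrite /= rev_cons revK.
Qed.

(* Ordinals of more than [k] digits exceed every code of length [k], so a code
   is a supremum as soon as it is least among the upper bounds of length [k]. *)
Lemma ois_sup_to_ord k (P : seq nat -> Prop) u : size u = k ->
  oub P (to_ord u) -> (forall v, size v = k -> oub P (to_ord v) -> lexle u v) ->
  ois_sup P (to_ord u).
Proof.
move=> su ubu least; split=> // [|y cy uby]; first exact: to_ord_canon.
case: (leqP (size y) k) => sy; last first.
  rewrite /ole /olt (leq_ltn_trans _ sy) ?orbT //.
  by rewrite -su size_to_ord.
case: (to_ord_pad cy sy) => sv ey; rewrite -ey ole_to_ord ?su //.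
by apply: least; rewrite // ey.
Qed.

Lemma choice_on (T U : Type) (u0 : U) (P : T -> Prop) (Q : T -> U -> Prop) :
  (forall t, P t -> exists u, Q t u) -> exists f : T -> U, forall t, P t -> Q t (f t).
Proof.
move=> PQ; have PQ' t : exists u, P t -> Q t u.
  by case: (classic (P t)) => [/PQ[u Qu]|nPt]; [exists u | exists u0].
exists (fun t => proj1_sig (constructive_indefinite_description _ (PQ' t))).
by move=> t; apply: (proj2_sig (constructive_indefinite_description _ (PQ' t))).
Qed.

Section Height.

Variables (X : Type) (inc : X -> X -> bool) (k : nat).

Definition residual (A : X -> Prop) (a : X) (x : X) : Prop := A x /\ inc a x.

(* The forest of [inc]-chains inside [A] (each new element [inc]-related to all
   earlier ones) has height at most the code [b] (resp. at least [b]); codes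
   are compared by [lexlt] on lists of length [k]. *)
Inductive height_le : (X -> Prop) -> seq nat -> Prop :=
  HeightLe A b (f : X -> seq nat) :
    (forall a, A a -> size (f a) = k) -> (forall a, A a -> lexlt (f a) b) ->
    (forall a, A a -> height_le (residual A a) (f a)) -> height_le A b.

Inductive height_ge : (X -> Prop) -> seq nat -> Prop :=
  HeightGe A b (f : seq nat -> X) :
    (forall g, size g = k -> lexlt g b -> A (f g)) ->
    (forall g, size g = k -> lexlt g b -> height_ge (residual A (f g)) g) ->
    height_ge A b.

Lemma height_leP A b :
  height_le A b <-> forall a, A a ->
    exists g, [/\ size g = k, lexlt g b & height_le (residual A a) g].
Proof.
split=> [|hA]; first by case=> {}A {}b f sf fb hf a Aa; exists (f a); split; auto.
have [f hf] := choice_on [::] hA.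
by apply: (@HeightLe _ _ f) => a /hf[].
Qed.

Lemma height_geP (x0 : X) A b :
  height_ge A b <-> forall g, size g = k -> lexlt g b ->
    exists a, A a /\ height_ge (residual A a) g.
Proof.
split=> [|hA]; first by case=> {}A {}b f Af hf g sg gb; exists (f g); split; auto.
have hA' g : size g = k /\ lexlt g b -> exists a, A a /\ height_ge (residual A a) g.
  by case=> sg gb; apply: hA.
have [f hf] := choice_on x0 hA'.
by apply: (@HeightGe _ _ f) => g sg gb; case: (hf g (conj sg gb)).
Qed.

Lemma height_le_sub A b B : height_le A b -> (forall x, B x -> A x) -> height_le B b.
Proof.
move=> hA; elim: hA B => {}A {}b f sf fb _ IH B BA.
apply: (@HeightLe _ _ f) => a Ba; auto.
by apply: IH; auto => x [Bx ax]; split; auto.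
Qed.

Lemma height_le_empty A b : (forall x, ~ A x) -> height_le A b.
Proof. by move=> A0; apply: (@HeightLe _ _ (fun _ => b)) => a /A0. Qed.

Lemma height_le_union A b B d : height_le A b -> size b = k ->
  height_le B d -> size d = k -> height_le (fun x => A x \/ B x) (nsum b d).
Proof.
move=> hA; elim: hA B d => {}A {}b f sf fb _ IHA B d sb hB.
elim: hB => {}B {}d f' sf' fb' hf' IHB sd.
have hBd : height_le B d by apply: (@HeightLe _ _ f').
apply/height_leP => a [Aa|Ba].
- exists (nsum (f a) d); split.
  + by rewrite size_nsum (sf a Aa) // sd.
  + by apply: lexlt_nsum2r; rewrite ?(sf a Aa) ?sd; auto.
  + by apply: height_le_sub (IHA a Aa B d (sf a Aa) hBd sd) _ => x [[Ax|Bx] ax];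
      [left | right].
- exists (nsum b (f' a)); split.
  + by rewrite size_nsum // sb (sf' a Ba).
  + by apply: lexlt_nsum2l; rewrite ?(sf' a Ba) ?sb ?sd; auto.
  + by apply: height_le_sub (IHB a Ba (sf' a Ba)) _ => x [[Ax|Bx] ax];
      [left | right].
Qed.

Lemma height_le_bigU (I : eqType) (l : seq I) (F : I -> X -> Prop) b :
  size b = k -> (forall i, i \in l -> height_le (F i) b) ->
  height_le (fun x => exists2 i, i \in l & F i x) (iter (size l) (nsum b) (nseq k 0)).
Proof.
move=> sb; elim: l => [|i l IH] hF /=.
  by apply: height_le_empty => x [].
have s_iter m : size (iter m (nsum b) (nseq k 0)) = k.
  by elim: m => [|m IHm] /=; rewrite ?size_nseq // size_nsum // IHm.
have hl : forall j, j \in l -> height_le (F j) b.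
  by move=> j jl; apply: hF; rewrite inE jl orbT.
apply: height_le_sub (height_le_union (hF i (mem_head i l)) sb (IH hl) (s_iter _)) _.
move=> x [j]; rewrite inE => /orP[/eqP<-|jl] Fx.
  by left.
by right; exists j.
Qed.

Lemma height_ge_sub A b B : height_ge A b -> (forall x, A x -> B x) -> height_ge B b.
Proof.
move=> hA; elim: hA B => {}A {}b f Af _ IH B AB.
apply: (@HeightGe _ _ f) => g sg gb; first by auto.
by apply: IH => // x [Ax ax]; split; auto.
Qed.

Lemma height_ge_le A b g : height_ge A b -> lexle g b -> height_ge A g.
Proof.
case=> {}A {}b f Af hf gb.
by apply: (@HeightGe _ _ f) => h sh hg; [apply: Af | apply: hf];
  rewrite // (lexlt_le_trans hg gb).
Qed.

Lemma height_ge0 (x0 : X) A : height_ge A (nseq k 0).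
Proof. by apply/(height_geP x0) => g _; rewrite lexlt_nseq0. Qed.

Lemma height_ge_le_ngt A b d : height_ge A b -> height_le A d -> size d = k ->
  ~~ lexlt d b.
Proof.
move=> hA; elim: hA d => {}A {}b f Af _ IH d hd sd; apply/negP=> db.
have [g [sg gd hg]] := proj1 (height_leP _ _) hd _ (Af d sd db).
by have := IH d sd db g hg sg; rewrite gd.
Qed.

Lemma height_ge_union A b B d : height_ge A b -> size b = k ->
  height_ge B d -> size d = k ->
  (forall x y, A x -> B y -> inc x y && inc y x) ->
  height_ge (fun x => A x \/ B x) (nsum b d).
Proof.
move=> hA; elim: hA B d => {}A {}b f Af hf IHA B d sb hB.
elim: hB => {}B {}d f' Af' hf' IHB sd AB.
apply/(height_geP (f b)) => g sg gb.
case: (lexlt_nsum_split (etrans sb (esym sg)) (etrans sd (esym sg)) gb)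
  => [[u' [su' bu' gu']]|[v' [sv' dv' gv']]].
- rewrite sg in su'; exists (f u'); split; first by left; apply: Af.
  have hB := HeightGe Af' hf'.
  have := IHA u' su' bu' B d su' hB sd (fun x y Ax By => AB x y (proj1 Ax) By).
  move/height_ge_le/(_ gu')/height_ge_sub; apply=> x [[Ax ax]|Bx]; split; auto.
  by case/andP: (AB _ _ (Af u' su' bu') Bx).
- rewrite sg in sv'; exists (f' v'); split; first by right; apply: Af'.
  have := IHB v' sv' dv' sv' (fun x y Ax By => AB x y Ax (proj1 By)).
  move/height_ge_le/(_ gv')/height_ge_sub; apply=> x [Ax|[Bx ax]]; split; auto.
  by case/andP: (AB _ _ Ax (Af' v' sv' dv')).
Qed.

End Height.

Arguments height_leP {X inc k A b}.
Arguments height_geP {X inc k} x0 {A b}.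
Arguments height_ge0 {X inc k} x0 {A}.

(* [monom n j K] is the code of length [n] of the ordinal [omega ^ j * K]. *)
Definition monom (n j K : nat) : seq nat := nseq (n.-1 - j) 0 ++ K :: nseq j 0.

Lemma size_monom n j K : j < n -> size (monom n j K) = n.
Proof.
move=> jn; rewrite /monom size_cat /= !size_nseq.
by case: n jn => // n jn; rewrite addnS subnK // -ltnS.
Qed.

Lemma monom0 n j : j < n -> monom n j 0 = nseq n 0.
Proof.
move=> jn; rewrite /monom -[0 :: _]/(nseq j.+1 0) -nseqD.
by case: n jn => // n jn; rewrite /= addnS subnK // -ltnS.
Qed.

Lemma nsum_monom n j K K' : nsum (monom n j K) (monom n j K') = monom n j (K + K').
Proof.
rewrite /monom nsum_nseq_cat /=; congr (_ ++ _ :: _).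
by elim: j => //= j ->.
Qed.

Lemma iter_nsum_monom n j M K : j < n ->
  iter K (nsum (monom n j M)) (nseq n 0) = monom n j (K * M).
Proof.
move=> jn; elim: K => [|K IH] /=; first by rewrite monom0.
by rewrite IH nsum_monom mulSn.
Qed.

Lemma lexlt_monom n j K K' : lexlt (monom n j K) (monom n j K') = (K < K').
Proof. by rewrite /monom lexlt_nseq_cat /= lexlt_nseq0 andbF orbF. Qed.

Lemma lexle_monom n j K K' : lexle (monom n j K) (monom n j K') = (K <= K').
Proof. by rewrite /lexle lexlt_monom /monom eqseq_cat // eqseq_cons !eqxx andbT /= -leq_eqVlt. Qed.

Lemma nseqS_cat p (w : seq nat) : nseq p.+1 0 ++ w = nseq p 0 ++ 0 :: w.
Proof. by elim: p => //= p ->. Qed.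

Lemma lexlt_monomS n j K : j.+1 < n -> lexlt (monom n j K) (monom n j.+1 1).
Proof.
move=> jn; rewrite /monom.
have -> : n.-1 - j = (n.-1 - j.+1).+1 by lia.
by rewrite nseqS_cat lexlt_nseq_cat.
Qed.

Lemma lexlt_monom_split p j y g : size g = p + j.+1 ->
  lexlt g (nseq p 0 ++ y :: nseq j 0) ->
  exists e r, [/\ g = nseq p 0 ++ e :: r, size r = j & e < y].
Proof.
elim: p g => [|p IH] [|x g] //=.
  case=> sg /orP[xy|/andP[_]]; last by rewrite lexlt_nseq0.
  by exists x, g.
rewrite addSn => -[sg] /andP[/eqP-> lt_g].
by case: (IH g sg lt_g) => e [r [-> sr ey]]; exists e, r.
Qed.

Section Orthants.

Variable n : nat.
Implicit Types (D : {set 'I_n}) (a c x : prodw n).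

Lemma prodw_leP x y : reflect (forall i, x i <= y i) (prodw_le x y).
Proof. exact: forallP. Qed.

Lemma prodw_nleP x y : reflect (exists i, y i < x i) (~~ prodw_le x y).
Proof.
rewrite /prodw_le negb_forall; apply: (iffP existsP) => -[i].
  by rewrite -ltnNge; exists i.
by rewrite ltnNge; exists i.
Qed.

Lemma incompC x y : incomp x y = incomp y x.
Proof. by rewrite /incomp andbC. Qed.

Definition upd c (i : 'I_n) (v : nat) : prodw n :=
  fun t => if t == i then v else c t.

Lemma updE c i v t : upd c i v t = if t == i then v else c t.
Proof. by []. Qed.

(* The points of [c + omega^D]: free above [c] on [D], equal to [c] elsewhere. *)
Definition orthant D c x : Prop :=
  forall t, if t \in D then is_true (c t <= x t) else x t = c t.

Lemma orthant_residual D c a x : orthant D c a -> orthant D c x ->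
  ~~ prodw_le a x -> exists2 i, i \in D & x i < a i /\ orthant (D :\ i) (upd c i (x i)) x.
Proof.
move=> Oa Ox /prodw_nleP[i xi].
have iD : i \in D.
  apply/negPn/negP => iD; move: (Ox i) (Oa i); rewrite (negbTE iD) => xci aci.
  by rewrite xci aci ltnn in xi.
exists i => //; split=> // t; rewrite !inE updE.
by case: (eqVneq t i) => [->|_] //=; apply: Ox.
Qed.

Lemma card_le_ord D : #|D| <= n.
Proof. by rewrite -[n in _ <= n]card_ord max_card. Qed.

Lemma height_le_orthant1 D c : #|D| = 1 -> height_le (@incomp n) n (orthant D c) (monom n 0 1).
Proof.
move/eqP/cards1P => [i ->].
have n_gt0 : 0 < n by apply: leq_ltn_trans (ltn_ord i).
apply/height_leP => a Oa; exists (nseq n 0); split.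
- by rewrite size_nseq.
- by rewrite -(monom0 n_gt0) lexlt_monom.
apply: height_le_empty => x [Ox /andP[/negP nax /negP nxa]].
have eq_ax t : t != i -> x t = a t.
  by move=> ti; move: (Ox t) (Oa t); rewrite inE (negbTE ti) => -> ->.
case: (leqP (x i) (a i)) => xai; [apply: nxa | apply: nax]; apply/prodw_leP => t;
  case: (eqVneq t i) => [->|/eq_ax->] //; exact: ltnW.
Qed.

Lemma height_le_orthant m D c : #|D| = m.+1 ->
  height_le (@incomp n) n (orthant D c) (monom n m 1).
Proof.
elim: m D c => [|m IH] D c cD; first exact: height_le_orthant1.
have mn : m.+1 < n by rewrite -cD card_le_ord.
apply/height_leP => a Oa.
set M := (\max_(t : 'I_n) a t).+1.
pose F i x := exists2 v, v \in iota 0 M & orthant (D :\ i) (upd c i v) x.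
have hF i : i \in enum D -> height_le (@incomp n) n (F i) (monom n m M).
  rewrite mem_enum => iD.
  have := @height_le_bigU _ (@incomp n) n _ (iota 0 M)
    (fun v => orthant (D :\ i) (upd c i v)) (monom n m 1) (size_monom _ (ltnW mn)).
  rewrite size_iota iter_nsum_monom ?muln1; last exact: ltnW.
  apply=> v _; apply: IH.
  by move: cD; rewrite (cardsD1 i) iD add1n => -[].
have := height_le_bigU (size_monom _ (ltnW mn)) hF.
rewrite iter_nsum_monom; last exact: ltnW.
move=> hU; exists (monom n m (size (enum D) * M)); split.
- exact: size_monom (ltnW mn).
- exact: lexlt_monomS.
apply: height_le_sub hU _ => x [Ox /andP[nax _]].
have [i iD [xi Oix]] := orthant_residual Oa Ox nax.
exists i; first by rewrite mem_enum.
exists (x i) => //; rewrite mem_iota add0n /M ltnS.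
exact: leq_trans (ltnW xi) (leq_bigmax i).
Qed.

End Orthants.

Lemma lexlt_monom0S n h g : 0 < n -> size g = n -> lexlt g (monom n 0 h.+1) ->
  lexle g (monom n 0 h).
Proof.
move=> n_gt0 sg; have sg' : size g = n.-1 - 0 + 1 by rewrite subn0 addn1 prednK.
case/(lexlt_monom_split sg') => e [r [-> /size0nil-> eh]].
by rewrite -[_ ++ [:: e]]/(monom n 0 e) lexle_monom -ltnS.
Qed.

Lemma lexlt_monomS_nsum n m h g : m.+1 < n -> size g = n ->
  lexlt g (monom n m.+1 h.+1) -> exists M, lexle g (nsum (monom n m.+1 h) (monom n m M)).
Proof.
move=> mn sg; set p := n.-1 - m.+1.
have pn : p + m.+2 = n by rewrite /p; lia.
rewrite -pn in sg; case/(lexlt_monom_split sg) => e [[|r0 r] [-> // [sr] eh]].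
exists r0.+1; set low := nseq p 0 ++ 0 :: r0 :: r.
have slow : size low = n by rewrite size_cat size_nseq /= sr.
have -> : nseq p 0 ++ e :: r0 :: r = nsum (monom n m.+1 e) low.
  by rewrite /monom /low nsum_nseq_cat /= addn0 add0n nsum_nseq0l.
apply: (@lexle_trans _ (nsum (monom n m.+1 h) low)).
  by apply: lexle_nsum2r; rewrite ?size_monom ?lexle_monom // -ltnS.
apply/lexle_nsum2l/lexltW; rewrite ?size_monom ?slow //; try lia.
have -> : monom n m r0.+1 = nseq p 0 ++ 0 :: r0.+1 :: nseq m 0.
  by rewrite /monom -nseqS_cat /p; congr (nseq _ _ ++ _); lia.
by rewrite lexlt_nseq_cat /= ltnSn.
Qed.

Section Slabs.

Variable n : nat.
Implicit Types (D : {set 'I_n}) (c x y : prodw n).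

Definition slab D c i h x : Prop := orthant D c x /\ x i < c i + h.

(* The pivot chosen in the lower bound: it splits the residual of
   [slab D c i h.+1] into an upper part (above the pivot in coordinate [j]) and
   a lower part (on the pivot's level in coordinate [i]). *)
Definition pivot c i j h M : prodw n := upd (upd c i (c i + h)) j (c j + M).

Lemma slab_pivot D c i j h M : i \in D -> j \in D -> j != i ->
  slab D c i h.+1 (pivot c i j h M).
Proof.
move=> iD jD ji; rewrite /pivot; split; last by rewrite !updE eq_sym (negbTE ji) eqxx addnS.
move=> t; rewrite !updE; case: (eqVneq t j) => [->|tj]; first by rewrite jD leq_addr.
by case: (eqVneq t i) => [->|ti]; [rewrite iD leq_addr | case: (t \in D)].
Qed.

Lemma slab_upper_residual D c i j h M x : i \in D -> j \in D -> j != i ->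
  slab D (upd c j (c j + M.+1)) i h x ->
  slab D c i h.+1 x /\ incomp (pivot c i j h M) x.
Proof.
move=> iD jD ji [Ox xi]; rewrite /pivot; rewrite updE eq_sym (negbTE ji) in xi.
have xj : c j + M.+1 <= x j by move: (Ox j); rewrite jD updE eqxx.
split; first split.
- move=> t; move: (Ox t); rewrite updE; case: (eqVneq t j) => [->|//].
  by rewrite jD; apply: leq_trans; rewrite leq_addr.
- by rewrite addnS ltnS ltnW.
apply/andP; split; apply/prodw_nleP.
  by exists i; rewrite !updE eq_sym (negbTE ji) eqxx.
by exists j; rewrite !updE eqxx; apply: leq_trans xj; rewrite addnS.
Qed.

Lemma slab_lower_residual D c i j l h M y : i \in D -> j != i ->
  l \in D -> l != i -> l != j ->
  slab (D :\ i) (upd (upd c i (c i + h)) l (c l + 1)) j M y ->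
  slab D c i h.+1 y /\ incomp (pivot c i j h M) y.
Proof.
move=> iD ji lD li lj [Oy yj]; rewrite /pivot.
rewrite !updE (negbTE ji) eq_sym (negbTE lj) in yj.
have yi : y i = c i + h.
  by move: (Oy i); rewrite !inE eqxx /= !updE eq_sym (negbTE li) eqxx.
have yl : c l + 1 <= y l by move: (Oy l); rewrite !inE li lD /= !updE eqxx.
split; first split.
- move=> t; case: (eqVneq t i) => [->|ti]; first by rewrite iD yi leq_addr.
  move: (Oy t); rewrite !inE ti /= !updE (negbTE ti).
  case: (eqVneq t l) => [->|//]; rewrite lD.
  by apply: leq_trans; rewrite leq_addr.
- by rewrite yi addnS ltnS.
apply/andP; split; apply/prodw_nleP; first by exists j; rewrite !updE eqxx.
by exists l; rewrite !updE (negbTE lj) (negbTE li) -addn1.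
Qed.

Lemma slab_upper_lower_incomp D c i j l h M x y : j \in D -> j != i ->
  l != i -> l != j ->
  slab D (upd c j (c j + M.+1)) i h x ->
  slab (D :\ i) (upd (upd c i (c i + h)) l (c l + 1)) j M y ->
  incomp x y && incomp y x.
Proof.
move=> jD ji li lj [Ox xi] [Oy yj].
rewrite updE eq_sym (negbTE ji) in xi.
have xj : c j + M.+1 <= x j by move: (Ox j); rewrite jD updE eqxx.
rewrite !updE (negbTE ji) eq_sym (negbTE lj) in yj.
have yi : y i = c i + h.
  by move: (Oy i); rewrite !inE eqxx /= !updE eq_sym (negbTE li) eqxx.
have xy : incomp x y.
  apply/andP; split; apply/prodw_nleP; last by exists i; rewrite yi.
  by exists j; apply: leq_trans xj; rewrite addnS ltnS ltnW.
by rewrite xy incompC xy.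
Qed.

Lemma exists_other D i m : #|D| = m.+2 -> i \in D -> exists2 j, j \in D & j != i.
Proof.
move=> cD iD; have : #|D :\ i| = m.+1 by move: cD; rewrite (cardsD1 i) iD => -[].
move=> cDi; have /set0Pn[j] : D :\ i != set0 by rewrite -card_gt0 cDi.
by rewrite !inE => /andP[ji jD]; exists j.
Qed.

End Slabs.

Section LowerBound.

Variable n : nat.
Implicit Types (D : {set 'I_n}) (c : prodw n).
Local Notation height_ge := (height_ge (@incomp n) n).

Lemma height_ge_slab_base D c i h : #|D| = 2 -> i \in D ->
  (forall c, height_ge (slab D c i h) (monom n 0 h)) ->
  height_ge (slab D c i h.+1) (monom n 0 h.+1).
Proof.
move=> cD iD IHh; have [j jD ji] := exists_other cD iD.
have n_gt0 : 0 < n by have := card_le_ord D; rewrite cD; lia.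
apply/(height_geP c) => g sg /(lexlt_monom0S n_gt0 sg) gh.
exists (pivot c i j h 0); split; first exact: slab_pivot.
apply: height_ge_sub (height_ge_le (IHh (upd c j (c j + 1))) gh) _ => x.
exact: slab_upper_residual.
Qed.

Lemma height_ge_slab_step m D c i h : #|D| = m.+3 -> i \in D ->
  (forall c, height_ge (slab D c i h) (monom n m.+1 h)) ->
  (forall M D' c j, #|D'| = m.+2 -> j \in D' -> height_ge (slab D' c j M) (monom n m M)) ->
  height_ge (slab D c i h.+1) (monom n m.+1 h.+1).
Proof.
move=> cD iD IHh IHm; have [j jD ji] := exists_other cD iD.
have cDi : #|D :\ i| = m.+2 by move: cD; rewrite (cardsD1 i) iD => -[].
have jDi : j \in D :\ i by rewrite !inE ji.
have [l] := exists_other cDi jDi; rewrite !inE => /andP[li lD] lj.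
have mn : m.+2 < n by rewrite -cD card_le_ord.
apply/(height_geP c) => g sg /(lexlt_monomS_nsum (ltnW mn) sg)[M gM].
exists (pivot c i j h M); split; first exact: slab_pivot.
have upper := IHh (upd c j (c j + M.+1)).
have lower := IHm M _ (upd (upd c i (c i + h)) l (c l + 1)) _ cDi jDi.
have := height_ge_union upper (size_monom _ (ltnW mn)) lower (size_monom _ (ltnW (ltnW mn)))
  (fun x y => slab_upper_lower_incomp jD ji li lj).
move/height_ge_le/(_ gM)/height_ge_sub; apply=> x [].
  exact: slab_upper_residual.
exact: slab_lower_residual.
Qed.

Lemma height_ge_slab m h D c i : #|D| = m.+2 -> i \in D ->
  height_ge (slab D c i h) (monom n m h).
Proof.
elim: m h D c i => [|m IHm] h; elim: h => [|h IHh] D c i cD iD;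
  try by rewrite monom0; [exact: (height_ge0 c) | have := card_le_ord D; rewrite cD; lia].
- by apply: height_ge_slab_base => // c'; apply: IHh.
- by apply: height_ge_slab_step => // c'; apply: IHh.
Qed.

End LowerBound.

Lemma to_ord_monom n : 0 < n -> to_ord (monom n n.-1 1) = opow_omega n.-1.
Proof. by move=> n_gt0; rewrite /monom subnn /to_ord /= rev_cons rev_nseq. Qed.

Section Width.

Variable n : nat.
Hypothesis n_gt0 : 0 < n.
Local Notation height_le := (height_le (@incomp n) n).
Local Notation height_ge := (height_ge (@incomp n) n).
Local Notation whole := (fun _ : prodw n => True).
Local Notation top := (monom n n.-1 1).

Lemma size_top : size top = n.
Proof. by rewrite size_monom // prednK. Qed.

Lemma height_le_whole : height_le whole top.
Proof.
have := @height_le_orthant n n.-1 [set: 'I_n] (fun _ => 0).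
rewrite cardsT card_ord prednK // => /(_ erefl)/height_le_sub; apply=> x _ t.
by rewrite inE.
Qed.

Lemma height_ge_whole : height_ge whole top.
Proof.
apply/(height_geP (fun _ => 0)) => g sg.
case: n n_gt0 sg => // -[_ sg /(lexlt_monom0S (ltn0Sn 0) sg) g0|m _ sg].
  move: g0; rewrite monom0 // => g0; exists (fun _ => 0); split=> //.
  exact: height_ge_le (height_ge0 (fun _ : 'I_1 => 0)) g0.
case/(lexlt_monomS_nsum (ltnSn _) sg) => M; rewrite monom0 // nsum_nseq0l ?size_monom // => gM.
pose i : 'I_m.+2 := ord0; pose j : 'I_m.+2 := ord_max.
exists (upd (fun _ => 0) j M); split=> //.
have := @height_ge_slab m.+2 m M [set: 'I_m.+2] (upd (fun _ => 0) i 1) j.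
rewrite cardsT card_ord inE => /(_ erefl erefl)/height_ge_le/(_ gM)/height_ge_sub.
apply=> x [Ox xj]; split=> //; apply/andP; split; apply/prodw_nleP.
  by exists j; rewrite updE eqxx; rewrite updE /= add0n in xj.
by exists i; move: (Ox i); rewrite inE !updE.
Qed.

Definition incomp_all (s : seq (prodw n)) (x : prodw n) : Prop := all (fun b => incomp b x) s.

Lemma incomp_all_rcons s a x :
  incomp_all (rcons s a) x <-> incomp_all s x /\ incomp a x.
Proof. by rewrite /incomp_all all_rcons andbC; split=> [/andP[]|[-> ->]]. Qed.

Lemma exists_least_height s : exists m, [/\ size m = n, height_le (incomp_all s) m &
  forall v, size v = n -> height_le (incomp_all s) v -> lexle m v].
Proof.
apply: lexle_minimum; exists top; split; first exact: size_top.
exact: height_le_sub height_le_whole _.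
Qed.

(* The rank of a node [s] is the least height of the set of its possible
   extensions. *)
Definition rank_code s : seq nat :=
  proj1_sig (constructive_indefinite_description _ (exists_least_height s)).

Lemma rank_codeP s : [/\ size (rank_code s) = n, height_le (incomp_all s) (rank_code s) &
  forall v, size v = n -> height_le (incomp_all s) v -> lexle (rank_code s) v].
Proof. exact: proj2_sig (constructive_indefinite_description _ (exists_least_height s)). Qed.

Lemma ole_osucc_rank s v : size v = n ->
  ole (osucc (to_ord (rank_code s))) (to_ord v) = lexlt (rank_code s) v.
Proof.
have [srk _ _] := rank_codeP s; move=> sv.
by rewrite ole_osucc_to_ord ?srk // -size_eq0 srk -lt0n.
Qed.

Lemma rank_code_lt A b s a : height_le A b -> A a ->
  (forall x, incomp_all s x -> A x /\ incomp a x) -> lexlt (rank_code s) b.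
Proof.
move=> /height_leP hA Aa sub; have [g [sg gb hg]] := hA a Aa.
have [_ _ least] := rank_codeP s.
exact: lexle_lt_trans (least g sg (height_le_sub hg sub)) gb.
Qed.

Lemma rank_code_is_rank_fun : is_rank_fun (fun s => to_ord (rank_code s)).
Proof.
move=> s [_ pw_s]; have [srk hrk least] := rank_codeP s.
apply: (ois_sup_to_ord srk).
  move=> o [t [[_ pw_t] [a et] ->]]; subst t.
  rewrite ole_osucc_rank ?srk //; apply: (rank_code_lt (a := a) hrk).
    by move: pw_t; rewrite pairwise_rcons => /andP[].
  by move=> x /incomp_all_rcons.
move=> v sv ub; apply: least => //; apply/height_leP => a sa.
have node : antichain_node (rcons s a).
  by split; [case: (s) | rewrite pairwise_rcons pw_s andbT].
have [srka hrka _] := rank_codeP (rcons s a).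
exists (rank_code (rcons s a)); split=> //.
  by rewrite -ole_osucc_rank //; apply: ub; exists (rcons s a); split=> //; exists a.
by apply: height_le_sub hrka _ => x [sx ax]; apply/incomp_all_rcons.
Qed.

Lemma rank_code_width :
  ois_sup (fun o => exists s, antichain_node s /\ o = osucc (to_ord (rank_code s)))
    (to_ord top).
Proof.
apply: (ois_sup_to_ord size_top).
  move=> o [s [[ne _] ->]]; case: s ne => [/(_ erefl)//|a s _].
  rewrite ole_osucc_rank ?size_top //.
  apply: (rank_code_lt (a := a) height_le_whole) => // x.
  by rewrite /incomp_all /= => /andP[].
move=> v sv ub; rewrite lexleNgt ?size_top //; apply/negP => v_top.
have [a [_ hv]] := proj1 (height_geP (fun _ => 0)) height_ge_whole v sv v_top.
have [srk hrk _] := rank_codeP [:: a].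
have /negP[] : ~~ lexlt (rank_code [:: a]) v.
  by apply: height_ge_le_ngt (height_ge_sub hv _) hrk srk => x [_ ax]; rewrite /incomp_all /= ax.
by rewrite -ole_osucc_rank //; apply: ub; exists [:: a].
Qed.

End Width.

Theorem mainTheorem6 (n : nat) : 1 <= n -> width_is n (opow_omega n.-1).
Proof.
move=> n_gt0; rewrite -(to_ord_monom n_gt0).
exists (fun s => to_ord (rank_code n_gt0 s)); split.
  exact: rank_code_is_rank_fun.
exact: rank_code_width.
Qed.
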